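(* Assume hypotheses (A1)–(A4) below. Let $\sigma_n\to\infty$ and $h_n\to0$ (with $h_n\in(0,h_0]$) as $n\to\infty$. Then the functionals $\mathcal E_{\sigma_n,h_n}$ $\Gamma$-converge as $n\to\infty$ in the strong topology of $\mathcal T_0$ to $\overline{\mathcal E}_\infty$.
   Context: Let $\{\mathcal T_\sigma\}_{\sigma\in\mathbb R\cup\{\pm\infty\}}$ be reflexive Banach spaces with norms $\|\cdot\|_{\mathcal T_\sigma}$, $\mathcal T_{-\sigma}:=\mathcal T_\sigma^*$, and $\mathcal T_\sigma\subset\mathcal T_0$ for $\sigma\in(0,\infty]$. Limits ''as $\sigma\to\infty$'' refer to arbitrary sequences $\sigma_n\to\infty$. (A1) (i) There is $M_1>0$ independent of $\sigma$ with $M_1\|u\|_{\mathcal T_0}\le\|u\|_{\mathcal T_\sigma}$ for all $\sigma\in(0,\infty]$, $u\in\mathcal T_\sigma$. (ii) If $v_\sigma\in\mathcal T_\sigma$ with $\|v_\sigma\|_{\mathcal T_\sigma}\le C$ ($C$ independent of $\sigma$), then $\{v_\sigma\}$ is relatively compact in $\mathcal T_0$ as $\sigma\to\infty$ and each limit point lies in $\mathcal T_\infty$. (A2) For each $\sigma\in(0,\infty]$, $\mathcal E_\sigma:\mathcal T_\sigma\to[0,\infty)$ is weakly lower semicontinuous on $\mathcal T_\sigma$, and: (i) there is $\varphi\in C^0([0,\infty)^2)$ with $|\mathcal E_\sigma(u)-\mathcal E_\sigma(v)|\le\varphi(\|u\|_{\mathcal T_\sigma},\|v\|_{\mathcal T_\sigma})\|u-v\|_{\mathcal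 T_\sigma}$ for all $u,v\in\mathcal T_\sigma$; (ii) there exist $p\in(1,\infty)$, $\alpha>0$, $\psi\in C^0([0,\infty))$ with $\psi(t)/t^p\to0$ as $t\to\infty$, independent of $\sigma$, with $\alpha\|u\|^p_{\mathcal T_\sigma}\le\mathcal E_\sigma(u)+\psi(\|u\|_{\mathcal T_\sigma})$. (A3) With $\overline{\mathcal E}_\sigma:\mathcal T_0\to[0,\infty]$ equal to $\mathcal E_\sigma$ on $\mathcal T_\sigma$ and $+\infty$ on $\mathcal T_0\setminus\mathcal T_\sigma$ ($\sigma\in(0,\infty]$), $\overline{\mathcal E}_\sigma$ $\Gamma$-converges to $\overline{\mathcal E}_\infty$ as $\sigma\to\infty$ in the strong topology of $\mathcal T_0$. (A4) For $\sigma\in(0,\infty]$, $h\in(0,h_0]$, $W_{\sigma,h}\subset\mathcal T_\sigma$ are finite-dimensional subspaces such that for each $h$ the span of $\bigcup_{\sigma\in(0,\infty]}W_{\sigma,h}$ is finite-dimensional, and: (i) for every $\sigma\in(0,\infty]$ and $u\in\mathcal T_\sigma$ there exist $h_n\to0$ and $u_n\in W_{\sigma,h_n}$ with $\|u-u_n\|_{\mathcal T_\sigma}\to0$; (ii) for each $h\in(0,h_0]$, $W_{\infty,h}=\mathcal T_\infty\cap\bigcup_{\sigma\in(0,\infty]}W_{\sigma,h}$; (iii) with $W_{\infty,0}:=\mathcal T_\infty$: for every $h\in[0,h_0]$, every $v\in W_{\infty,h}$ and every sequence $(\sigma_n,h_n)$ with $\sigma_n\to\infty$, $h_n\in(0,h_0]$,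 and $h_n=h$ for all $n$ if $h>0$, $h_n\to0$ if $h=0$, there exist $v_{\sigma_n}\in\mathcal T_{\sigma_n}$ with $\|v_{\sigma_n}-v\|_{\mathcal T_0}\to0$ and $\mathcal E_{\sigma_n}(v_{\sigma_n})\to\mathcal E_\infty(v)$, and $v_n\in W_{\sigma_n,h_n}$ with $\|v_n-v_{\sigma_n}\|_{\mathcal T_{\sigma_n}}\to0$. Define $\mathcal E_{\sigma,h}:\mathcal T_0\to[0,\infty]$ by $\mathcal E_{\sigma,h}=\mathcal E_\sigma$ on $W_{\sigma,h}$ and $+\infty$ on $\mathcal T_0\setminus W_{\sigma,h}$. $\Gamma$-convergence of $I_n$ to $I$ in a topology means: (1) $I(v)\le\liminf I_n(v_n)$ whenever $v_n\to v$; (2) for each $v$ there is $v_n\to v$ with $\limsup I_n(v_n)\le I(v)$. *)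

From HB Require Import structures.
From mathcomp Require Import all_boot all_order all_algebra.
From mathcomp Require Import all_classical all_reals all_analysis.
Set Implicit Arguments. Unset Strict Implicit. Unset Printing Implicit Defensive.
Import Order.TTheory GRing.Theory Num.Theory.
Import numFieldNormedType.Exports.
Local Open Scope classical_set_scope.
Local Open Scope ring_scope.

Section Defs.
Context {R : realType} {V : normedModType R}.

Definition normed_subspace (S : set V) (N : V -> R) : Prop :=
  [/\ S 0, (forall x y, S x -> S y -> S (x + y)) &
      (forall (a : R) x, S x -> S (a *: x))] /\
  [/\ (forall x, S x -> 0 <= N x /\ (N x = 0 -> x = 0)),
      (forall (a : R) x, S x -> N (a *: x) = `|a| * N x) &
      (forall x y, S x -> S y -> N (x + y) <= N x + N y)].

Definition nsub_complete (S : set V) (N : V -> R) : Prop :=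
  forall u : nat -> V, (forall n, S (u n)) ->
    (forall e : R, 0 < e -> exists m, forall n k, (m <= n)%N -> (m <= k)%N ->
        N (u n - u k) < e) ->
    exists2 x, S x & (fun n => N (u n - x)) @ \oo --> (0 : R).

Definition dual_bound (S : set V) (N : V -> R) (f : V -> R) (K : R) : Prop :=
  0 <= K /\ forall x, S x -> `|f x| <= K * N x.

(** Elements of the dual of (S, N): bounded linear functionals (represented
    by functions on V; only their values on S matter). *)
Definition dual_elt (S : set V) (N : V -> R) (f : V -> R) : Prop :=
  (forall x y, S x -> S y -> f (x + y) = f x + f y) /\
  (forall (a : R) x, S x -> f (a *: x) = a * f x) /\
  exists K, dual_bound S N f K.

(** Elements of the bidual: bounded linear functionals on the dual
    (boundedness w.r.t. the dual norm, which is the least dual bound). *)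
Definition bidual_elt (S : set V) (N : V -> R) (Phi : (V -> R) -> R) : Prop :=
  (forall f g, dual_elt S N f -> dual_elt S N g -> Phi (f \+ g) = Phi f + Phi g) /\
  (forall (a : R) f, dual_elt S N f -> Phi (fun x => a * f x) = a * Phi f) /\
  exists C, 0 <= C /\ forall f K, dual_elt S N f -> dual_bound S N f K ->
     `|Phi f| <= C * K.

Definition reflexive_banach (S : set V) (N : V -> R) : Prop :=
  [/\ normed_subspace S N, nsub_complete S N &
      forall Phi, bidual_elt S N Phi ->
        exists2 x, S x & forall f, dual_elt S N f -> Phi f = f x].

Definition weakly_lsc (S : set V) (N : V -> R) (E : V -> R) : Prop :=
  forall u, S u -> forall c, c < E u ->
    exists k (fs : 'I_k -> V -> R) (eps : R),
      [/\ 0 < eps, (forall i, dual_elt S N (fs i)) &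
          forall a, S a -> (forall i, `|fs i a - fs i u| < eps) -> c < E a].

Definition ext_inf (S : set V) (E : V -> R) : V -> \bar R :=
  fun u => if asbool (S u) then (E u)%:E else +oo%E.

Definition Gamma_conv (I : nat -> V -> \bar R) (J : V -> \bar R) : Prop :=
  (forall v (vn : nat -> V), vn @ \oo --> v ->
      (J v <= limn_einf (fun n => I n (vn n)))%E) /\
  (forall v, exists vn : nat -> V, vn @ \oo --> v /\
      (limn_esup (fun n => I n (vn n)) <= J v)%E).

Definition lspan (A : set V) : set V :=
  [set x | exists k (a : 'I_k -> V) (c : 'I_k -> R),
      (forall i, A (a i)) /\ x = \sum_(i < k) c i *: a i].

Definition fin_dim_subspace (W : set V) : Prop :=
  exists k (b : 'I_k -> V),
    W = [set x | exists c : 'I_k -> R, x = \sum_(i < k) c i *: b i].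

Definition to_infty (s : nat -> R) : Prop :=
  (forall n, 0 < s n) /\ s @ \oo --> +oo.

(** Indexing convention: spaces, norms, energies are indexed by
    sigma : \bar R; only sigma in (0, +oo] is used (sigma = +oo is T_oo);
    T_0 is V itself with its norm. *)

Definition A1 (T : \bar R -> set V) (N : \bar R -> V -> R) : Prop :=
  (exists2 M1 : R, 0 < M1 &
     forall s : \bar R, (0 < s)%E -> forall u, T s u -> M1 * `|u| <= N s u) /\
  (forall (C : R) (sg : nat -> R) (v : nat -> V), to_infty sg ->
     (forall n, T (sg n)%:E (v n)) -> (forall n, N (sg n)%:E (v n) <= C) ->
     (exists (phi : nat -> nat) (w : V),
        {homo phi : m n / (m < n)%N >-> (m < n)%N} /\ (v \o phi) @ \oo --> w) /\
     (forall (phi : nat -> nat) (w : V),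
        {homo phi : m n / (m < n)%N >-> (m < n)%N} -> (v \o phi) @ \oo --> w ->
        T +oo%E w)).

Definition A2 (T : \bar R -> set V) (N : \bar R -> V -> R)
    (E : \bar R -> V -> R) : Prop :=
  (forall s : \bar R, (0 < s)%E ->
     (forall u, T s u -> 0 <= E s u) /\ weakly_lsc (T s) (N s) (E s)) /\
  (exists phi : R * R -> R,
     {within [set p | 0 <= p.1 /\ 0 <= p.2], continuous phi} /\
     forall s : \bar R, (0 < s)%E -> forall u v, T s u -> T s v ->
       `|E s u - E s v| <= phi (N s u, N s v) * N s (u - v)) /\
  (exists (p alpha : R) (psi : R -> R),
     [/\ 1 < p, 0 < alpha, {within `[0, +oo[, continuous psi},
         (fun t => psi t / t `^ p) @ +oo --> (0 : R) &
         forall s : \bar R, (0 < s)%E -> forall u, T s u ->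
           alpha * N s u `^ p <= E s u + psi (N s u)]).

Definition A3 (T : \bar R -> set V) (E : \bar R -> V -> R) : Prop :=
  forall sg : nat -> R, to_infty sg ->
    Gamma_conv (fun n => ext_inf (T (sg n)%:E) (E (sg n)%:E))
               (ext_inf (T +oo%E) (E +oo%E)).

Definition A4 (T : \bar R -> set V) (N : \bar R -> V -> R)
    (E : \bar R -> V -> R) (W : \bar R -> R -> set V) (h0 : R) : Prop :=
  [/\ 0 < h0,
    (forall s : \bar R, (0 < s)%E -> forall h, 0 < h <= h0 ->
       fin_dim_subspace (W s h) /\ W s h `<=` T s) &
    (forall h, 0 < h <= h0 ->
       fin_dim_subspace (lspan (\bigcup_(s in [set s : \bar R | (0 < s)%E]) W s h)))] /\
  [/\
    (forall s : \bar R, (0 < s)%E -> forall u, T s u ->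
       exists (hn : nat -> R) (un : nat -> V),
         [/\ (forall n, 0 < hn n <= h0), hn @ \oo --> (0 : R),
             (forall n, W s (hn n) (un n)) &
             (fun n => N s (u - un n)) @ \oo --> (0 : R)]),
    (forall h, 0 < h <= h0 ->
       W +oo%E h = T +oo%E `&` \bigcup_(s in [set s : \bar R | (0 < s)%E]) W s h) &
    (forall (h : R) (v : V) (sg hn : nat -> R),
       0 <= h <= h0 ->
       (if h == 0 then T +oo%E v else W +oo%E h v) ->
       to_infty sg -> (forall n, 0 < hn n <= h0) ->
       (if h == 0 then hn @ \oo --> (0 : R) else forall n, hn n = h) ->
       exists vs vn : nat -> V,
         [/\ (forall n, T (sg n)%:E (vs n)),
             (fun n => `|vs n - v|) @ \oo --> (0 : R),
             (fun n => E (sg n)%:E (vs n)) @ \oo --> E +oo%E v,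
             (forall n, W (sg n)%:E (hn n) (vn n)) &
             (fun n => N (sg n)%:E (vn n - vs n)) @ \oo --> (0 : R)])].

Definition Edisc (W : set V) (E : V -> R) : V -> \bar R := ext_inf W E.

End Defs.

(** The lower bound is inherited from (A3): [W_{sigma,h}] is contained in
    [T_sigma], so [E_{sigma,h}] dominates the extension of [E_sigma] by +oo.
    For a recovery sequence of [v] in [T_oo], (A4)(iii) with [h = 0] provides
    [v_sigma -> v] with [E_sigma(v_sigma) -> E_oo(v)], and discrete [v_n] that
    are [T_sigma]-close to [v_sigma].  The uniform norm comparison (A1)(i)
    turns this closeness into [v_n -> v] in [T_0], while coercivity (A2)(ii)
    keeps [v_sigma] and [v_n] in a fixed ball, on which the local Lipschitz
    bound (A2)(i) has a uniform constant; hence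
    [E_sigma(v_n) - E_sigma(v_sigma) -> 0]. *)
From HB Require Import structures.
From mathcomp Require Import all_boot all_order all_algebra.
From mathcomp Require Import all_classical all_reals all_analysis.
From mathcomp Require Import lra.
Set Implicit Arguments. Unset Strict Implicit. Unset Printing Implicit Defensive.
Import Order.TTheory GRing.Theory Num.Theory.
Import numFieldNormedType.Exports.
Local Open Scope classical_set_scope.
Local Open Scope ring_scope.

Lemma le_limn_einf (R : realType) (u v : (\bar R)^nat) :
  (forall n, (u n <= v n)%E) -> (limn_einf u <= limn_einf v)%E.
Proof.
move=> uv; rewrite !limn_einf_lim.
apply: lee_lim; [exact: is_cvg_einfs | exact: is_cvg_einfs |].
apply: nearW => n; apply: le_ereal_inf_tmp => _ [m /= nm <-].
by apply: le_trans (uv m); apply: ereal_inf_lbound; exists m.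
Qed.

Lemma cvg_dominated_diff (R : realFieldType) (V : normedModType R)
    (a b : nat -> V) (d : nat -> R) (C : R) (l : V) :
  (\forall n \near \oo, `|a n - b n| <= C * d n) ->
  d @ \oo --> 0 -> b @ \oo --> l -> a @ \oo --> l.
Proof.
move=> ab_le d0 bl.
have Cd0 : (fun n => C * d n) @ \oo --> (0 : R).
  by rewrite -(mulr0 C); apply: cvgMl_tmp.
have ab0 : (fun n => a n - b n) @ \oo --> 0.
  apply: norm_cvg0; apply: (squeeze_cvgr _ (cvg_cst 0) Cd0).
  by near=> n; rewrite normr_ge0 /=; near: n.
rewrite -[l]add0r; have -> : a = (fun n => a n - b n) + b.
  by apply: funext => n; rewrite /= subrK.
exact: cvgD.
Unshelve. all: by end_near. Qed.

Lemma continuous_quadrant_bounded (R : realType) (phi : R * R -> R) (K : R) :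
  {within [set p | 0 <= p.1 /\ 0 <= p.2], continuous phi} ->
  exists C : R, forall a b, 0 <= a <= K -> 0 <= b <= K -> phi (a, b) <= C.
Proof.
move=> cphi.
have square_compact : compact (`[0, K] `*` `[0, K] : set (R * R)).
  by apply: compact_setX; exact: segment_compact.
have square_sub : (`[0, K] `*` `[0, K] : set (R * R))
    `<=` [set p | 0 <= p.1 /\ 0 <= p.2].
  by move=> [a b] /= []; rewrite !in_itv /= => /andP[a0 _] /andP[b0 _].
have [M [_ HM]] := compact_bounded
  (continuous_compact (continuous_subspaceW square_sub cphi) square_compact).
have ltMM1 : M < M + 1 by rewrite ltrDl.
exists (M + 1) => a b Ha Hb.
have /= := HM (M + 1) ltMM1 (phi (a, b)).
move=> /(_ _) bound; apply: le_trans (ler_norm _) (bound _).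
by exists (a, b) => //; split; rewrite /= in_itv /=.
Qed.

Lemma coercive_sublevel_bounded (R : realType) (p alpha B : R) (psi : R -> R) :
  1 < p -> 0 < alpha -> (fun t => psi t / t `^ p) @ +oo --> (0 : R) ->
  exists K, forall t, 0 <= t -> alpha * t `^ p <= B + psi t -> t <= K.
Proof.
move=> p1 alpha0 /cvgr0Pnorm_lt /(_ (alpha / 2)) [|M [_ HM]]; first by lra.
exists (Num.max M (Num.max 1 (2 * B / alpha))) => t t0 sublevel.
rewrite leNgt; apply/negP => /[dup] tK.
rewrite !gt_max => /and3P[Mt t1 Bt].
have t_le_tp : t <= t `^ p by rewrite -{1}(powRr1 t0) ler_powR //; lra.
have tp0 : 0 < t `^ p by lra.
have := HM t Mt; rewrite normrM normfV (gtr0_norm tp0) ltr_pdivrMr // => psi_lt.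
have {}psi_lt : psi t < alpha / 2 * t `^ p by apply: le_lt_trans (ler_norm _) psi_lt.
rewrite ltr_pdivrMr // in Bt.
nra.
Qed.

Lemma ext_infS (R : realType) (V : normedModType R) (A B : set V)
    (F : V -> R) (u : V) :
  A `<=` B -> (ext_inf B F u <= ext_inf A F u)%E.
Proof.
move=> AB; rewrite /ext_inf; case: (asboolP (A u)) => [Au|_]; last exact: leey.
by rewrite asboolT //; exact: AB.
Qed.

Lemma Gamma_liminf_le (R : realType) (V : normedModType R)
    (I J : nat -> V -> \bar R) (L : V -> \bar R) :
  Gamma_conv I L -> (forall n u, (I n u <= J n u)%E) ->
  forall v (vn : nat -> V), vn @ \oo --> v ->
    (L v <= limn_einf (fun n => J n (vn n)))%E.
Proof.
move=> [IL _] IJ v vn vnv; apply: le_trans (IL v vn vnv) _.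
by apply: le_limn_einf => n; exact: IJ.
Qed.

Section RecoverySequence.
Variables (R : realType) (V : normedModType R).
Variables (T : \bar R -> set V) (N : \bar R -> V -> R) (E : \bar R -> V -> R).
Hypothesis HT : forall s : \bar R, (0 < s)%E -> normed_subspace (T s) (N s).
Hypothesis HA1 : A1 T N.
Hypothesis HA2 : A2 T N E.

Lemma subspace_subr (s : \bar R) x y :
  (0 < s)%E -> T s x -> T s y -> T s (x - y).
Proof.
move=> s0 Tx Ty; have [[_ addT scaleT] _] := HT s0.
by rewrite -scaleN1r; apply: addT => //; exact: scaleT.
Qed.

Lemma subspace_norm_ge0 (s : \bar R) x : (0 < s)%E -> T s x -> 0 <= N s x.
Proof. by move=> s0 Tx; have [_ [N_ge0 _ _]] := HT s0; have [] := N_ge0 x Tx. Qed.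

Lemma subspace_normD (s : \bar R) x y : (0 < s)%E -> T s x -> T s y ->
  N s (x + y) <= N s x + N s y.
Proof. by move=> s0 Tx Ty; have [_ [_ _ ND]] := HT s0; exact: ND. Qed.

Lemma energy_sublevel_norm_bounded (B : R) :
  exists K, forall s : \bar R, (0 < s)%E -> forall u, T s u ->
    E s u <= B -> N s u <= K.
Proof.
have [_ [_ [p [alpha [psi [p1 alpha0 _ psi_small coercive]]]]]] := HA2.
have [K HK] := coercive_sublevel_bounded B p1 alpha0 psi_small.
exists K => s s0 u Tu EuB; apply: HK; first exact: subspace_norm_ge0 Tu.
by apply: le_trans (coercive _ s0 _ Tu) _; rewrite lerD2r.
Qed.

Variables (s : nat -> \bar R) (vs vn : nat -> V).
Hypothesis s_gt0 : forall n, (0 < s n)%E.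
Hypothesis Tvs : forall n, T (s n) (vs n).
Hypothesis Tvn : forall n, T (s n) (vn n).
Hypothesis vn_close : (fun n => N (s n) (vn n - vs n)) @ \oo --> (0 : R).

Lemma cvg_close_seq (v : V) : vs @ \oo --> v -> vn @ \oo --> v.
Proof.
have [[M1 M10 normT_ge] _] := HA1.
apply: (cvg_dominated_diff (C := M1^-1)) vn_close.
apply: nearW => n; rewrite ler_pdivlMl //.
exact/normT_ge/subspace_subr.
Qed.

Lemma cvg_energy_close_seq (l : R) :
  (fun n => E (s n) (vs n)) @ \oo --> l -> (fun n => E (s n) (vn n)) @ \oo --> l.
Proof.
move=> Evs_l.
have [_ [[phi [cphi lipschitz]] _]] := HA2.
have [K HK] := energy_sublevel_norm_bounded (l + 1).
have [C HC] := continuous_quadrant_bounded (K + 1) cphi.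
have /cvgrPdist_lt/(_ 1 ltr01) Evs_near := Evs_l.
have /cvgr0Pnorm_lt/(_ 1 ltr01) close_near := vn_close.
apply: (cvg_dominated_diff (C := C)) vn_close Evs_l.
near=> n.
have Tvd := subspace_subr (s_gt0 n) (Tvn n) (Tvs n).
have d0 := subspace_norm_ge0 (s_gt0 n) Tvd.
have d1 : N (s n) (vn n - vs n) < 1.
  by rewrite -(ger0_norm d0); near: n; exact: close_near.
have Nvs : N (s n) (vs n) <= K.
  apply: HK (s_gt0 n) _ (Tvs n) _.
  have : `|l - E (s n) (vs n)| < 1 by near: n; exact: Evs_near.
  by rewrite distrC => /(le_lt_trans (ler_norm _)); lra.
have Nvn : N (s n) (vn n) <= K + 1.
  have := subspace_normD (s_gt0 n) Tvd (Tvs n); rewrite subrK; lra.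
have Cbound : phi (N (s n) (vn n), N (s n) (vs n)) <= C.
  apply: HC; rewrite ?subspace_norm_ge0 //=; lra.
apply: le_trans (lipschitz _ (s_gt0 n) _ _ (Tvn n) (Tvs n)) _.
exact: ler_wpM2r.
Unshelve. all: by end_near. Qed.

End RecoverySequence.

Lemma discrete_recovery_sequence (R : realType) (V : normedModType R)
    (T : \bar R -> set V) (N : \bar R -> V -> R) (E : \bar R -> V -> R)
    (W : \bar R -> R -> set V) (h0 : R)
    (HT : forall s : \bar R, (0 < s)%E -> normed_subspace (T s) (N s))
    (HA1 : A1 T N) (HA2 : A2 T N E) (HA4 : A4 T N E W h0)
    (sg hn : nat -> R) (Hsg : to_infty sg)
    (Hhn : forall n, 0 < hn n <= h0) (Hhn0 : hn @ \oo --> (0 : R)) (v : V) :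
  T +oo%E v ->
  exists vn : nat -> V, [/\ forall n, W (sg n)%:E (hn n) (vn n),
    vn @ \oo --> v & (fun n => E (sg n)%:E (vn n)) @ \oo --> E +oo%E v].
Proof.
move=> Tv; have [[h0_gt0 W_sub _] [_ _ approx]] := HA4.
have sg_gt0 n : (0 < (sg n)%:E)%E by rewrite lte_fin; exact: Hsg.1.
have [|||vs [vn [Tvs vs_v Evs Wvn vn_close]]] :=
  approx 0 v sg hn _ _ Hsg Hhn _; rewrite ?eqxx ?lexx ?ltW //.
have Tvn n : T (sg n)%:E (vn n) by apply: (W_sub _ (sg_gt0 n) _ (Hhn n)).2.
exists vn; split => //; last first.
  exact: (cvg_energy_close_seq HT HA2 sg_gt0 Tvs Tvn vn_close Evs).
have vs_to_v : vs @ \oo --> v by rewrite -subr_cvg0; exact: norm_cvg0.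
exact: (cvg_close_seq HT HA1 sg_gt0 Tvs Tvn vn_close vs_to_v).
Qed.

Theorem theorem2p13 (R : realType) (V : normedModType R)
    (T : \bar R -> set V) (N : \bar R -> V -> R) (E : \bar R -> V -> R)
    (W : \bar R -> R -> set V) (h0 : R)
    (HT0 : reflexive_banach [set: V] (fun x : V => `|x|))
    (HT : forall s : \bar R, (0 < s)%E -> reflexive_banach (T s) (N s))
    (HA1 : A1 T N) (HA2 : A2 T N E) (HA3 : A3 T E) (HA4 : A4 T N E W h0)
    (sg hn : nat -> R) (Hsg : to_infty sg)
    (Hhn : forall n, 0 < hn n <= h0) (Hhn0 : hn @ \oo --> (0 : R)) :
  Gamma_conv (fun n => Edisc (W (sg n)%:E (hn n)) (E (sg n)%:E))
             (ext_inf (T +oo%E) (E +oo%E)).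
Proof.
have HTn s (s0 : (0 < s)%E) : normed_subspace (T s) (N s) by have [] := HT s s0.
pose Esgh n := Edisc (W (sg n)%:E (hn n)) (E (sg n)%:E).
have W_sub_T n : W (sg n)%:E (hn n) `<=` T (sg n)%:E.
  have [[_ W_sub _] _] := HA4; apply: (W_sub _ _ _ (Hhn n)).2.
  by rewrite lte_fin; exact: Hsg.1.
split.
  apply: (Gamma_liminf_le (J := Esgh) (HA3 sg Hsg)) => n u.
  exact/ext_infS/W_sub_T.
move=> v; case: (asboolP (T +oo%E v)) => Tv; last first.
  exists (fun=> v); split; first exact: cvg_cst.
  by rewrite /ext_inf asboolF //; exact: leey.
have [vn [Wvn vn_v Evn]] :=
  discrete_recovery_sequence HTn HA1 HA2 HA4 Hsg Hhn Hhn0 Tv.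
exists vn; split => //.
have -> : (fun n => Edisc (W (sg n)%:E (hn n)) (E (sg n)%:E) (vn n))
    = (fun n => (E (sg n)%:E (vn n))%:E).
  by apply: funext => n; rewrite /Edisc /ext_inf asboolT.
rewrite /ext_inf asboolT // (cvg_limn_einf_sup (l := (E +oo%E v)%:E) _).2 //.
by apply: cvg_EFin; [exact: nearW |].
Qed.
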